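(* Consider, for known parameters $\boldsymbol\theta$ as in the context, the optimization problem in the prices $\mathbf p=(p_{ij})_{i\neq j}$: $$\max\ \sum_{i\in\mathcal N}\sum_{j\neq i}\xi_{ij}(\alpha_{ij}-\beta_{ij}p_{ij}+\epsilon_{ij}^-)p_{ij}-\sum_{i\in\mathcal N}\sum_{j\neq i}\xi_{ij}(\alpha_{ij}-\beta_{ij}p_{ij})c$$ subject to $\sum_{j\neq i}(\alpha_{ij}-\beta_{ij}p_{ij})=\sum_{j\neq i}(\alpha_{ji}-\beta_{ji}p_{ji})$ for all $i\in\mathcal N$, and $p_{ij}\le p_{\max}$ for all $i\neq j$. Let $\mathbf p^*(\boldsymbol\theta)$ be its optimal solution and $\mu_{ij}^*$ the optimal dual variable associated with the constraint $p_{ij}\le p_{\max}$. If $\mu_{ij}^*=0$ for all $(i,j)$, then for every link $(i,j)$, $$p_{ij}^*(\boldsymbol\theta)=\frac{c\beta_{ij}+\alpha_{ij}+\epsilon_{ij}^-}{2\beta_{ij}}+\frac{1}{4\xi_{ij}}\sum_{k\in\mathcal N}\big(R_{jk}(\boldsymbol\beta)-R_{ik}(\boldsymbol\beta)\big)v_k(\boldsymbol\theta),$$ where $v_k(\boldsymbol\theta)=\sum_{j\neq k}(\alpha_{kj}-c\beta_{kj}-\epsilon_{kj}^-)-\sum_{j\neq k}(\alpha_{jk}-c\beta_{jk}-\epsilon_{jk}^-)$.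
   Context: Locations $\mathcal N=\{1,\dots,N\}$. For each ordered pair $(i,j)$, $i\neq j$: parameters $\alpha_{ij}>0$, $\beta_{ij}>0$ (collected in $\boldsymbol\theta$, with $\boldsymbol\beta=(\beta_{ij})_{i\neq j}$), travel time $\xi_{ij}>0$, and a random demand shock $\epsilon_{ij}$ supported in $[\underline\epsilon,\overline\epsilon]$ with c.d.f. $F_{ij}$ and mean zero; $\epsilon_{ij}^-:=\int_{\underline\epsilon}^{0}x\,dF_{ij}(x)$ (a nonpositive number). $c>0$ is a per-slot vehicle cost and $p_{\max}>c$ a maximum price. Effective resistances: form the resistor network on nodes $\mathcal N$ in which, for each $i<j$, nodes $i$ and $j$ are joined by a resistor of resistance $r_{ij}=1/(\beta_{ij}/\xi_{ij}+\beta_{ji}/\xi_{ji})$. $R_{ij}(\boldsymbol\beta)$ denotes the effective resistance between nodes $i$ and $j$ in this network, i.e. the voltage between $i$ and $j$ when a unit current is injected at $i$ and extracted at $j$ (with $R_{ii}(\boldsymbol\beta)=0$). *)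

From HB Require Import structures.
From mathcomp Require Import all_boot all_order all_algebra.
From mathcomp Require Import all_classical all_reals all_analysis.

Set Implicit Arguments.
Unset Strict Implicit.
Unset Printing Implicit Defensive.

Import Order.TTheory GRing.Theory Num.Theory.
Local Open Scope ring_scope.

Section Pricing.
Variables (R : realType) (N : nat).

(* eps^-_{ij} = \int_{lo}^{0} x dF_{ij}(x), lo = lower end of the support *)
Definition eps_minus (lo : R) (F : probability R R) : R :=
  fine (\int[F]_(x in `[lo, 0%R]%classic) x%:E)%E.

Variables (alpha beta xi em : 'I_N -> 'I_N -> R) (c pmax : R).

Definition demand (p : 'I_N -> 'I_N -> R) (i j : 'I_N) : R :=
  alpha i j - beta i j * p i j.

Definition objective (p : 'I_N -> 'I_N -> R) : R :=
  \sum_(i < N) \sum_(j < N | j != i) xi i j * (alpha i j - beta i j * p i j + em i j) * p i j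
  - \sum_(i < N) \sum_(j < N | j != i) xi i j * (alpha i j - beta i j * p i j) * c.

Definition balance (p : 'I_N -> 'I_N -> R) (i : 'I_N) : R :=
  \sum_(j < N | j != i) (alpha i j - beta i j * p i j)
  - \sum_(j < N | j != i) (alpha j i - beta j i * p j i).

Definition feasible (p : 'I_N -> 'I_N -> R) : Prop :=
  (forall i, balance p i = 0) /\ (forall i j, i != j -> p i j <= pmax).

Definition optimal (p : 'I_N -> 'I_N -> R) : Prop :=
  feasible p /\ forall q, feasible q -> objective q <= objective p.

Definition lagrangian (p : 'I_N -> 'I_N -> R) (lam : 'I_N -> R)
    (mu : 'I_N -> 'I_N -> R) : R :=
  objective p + \sum_(i < N) lam i * balance p i
  - \sum_(i < N) \sum_(j < N | j != i) mu i j * (p i j - pmax).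

Definition optimal_dual (p : 'I_N -> 'I_N -> R) (lam : 'I_N -> R)
    (mu : 'I_N -> 'I_N -> R) : Prop :=
  (forall i j, i != j -> 0 <= mu i j /\ mu i j * (p i j - pmax) = 0) /\
  (forall q, lagrangian q lam mu <= lagrangian p lam mu).

Definition vnode (k : 'I_N) : R :=
  \sum_(j < N | j != k) (alpha k j - c * beta k j - em k j)
  - \sum_(j < N | j != k) (alpha j k - c * beta j k - em j k).

End Pricing.

Section Resistance.
Variables (R : realType) (N : nat) (beta xi : 'I_N -> 'I_N -> R).

Definition resist (k l : 'I_N) : R :=
  1 / (beta k l / xi k l + beta l k / xi l k).

Definition unit_current_potential (i j : 'I_N) (phi : 'I_N -> R) : Prop :=
  forall k, \sum_(l < N | l != k) (phi k - phi l) / resist k l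
            = (k == i)%:R - (k == j)%:R.

Definition eff_res (i j : 'I_N) : R :=
  match pselect (exists phi, unit_current_potential i j phi) with
  | left h => let phi := projT1 (cid h) in phi i - phi j
  | right _ => 0
  end.

End Resistance.

From HB Require Import structures.
From mathcomp Require Import all_boot all_order all_algebra.
From mathcomp Require Import all_classical all_reals all_analysis.
From mathcomp Require Import ring lra zify.
Import Order.TTheory GRing.Theory Num.Theory.
Local Open Scope ring_scope.

(* With every price-cap multiplier zero, the Lagrangian separates over links
   into concave quadratics in [p i j], so stationarity gives
   [p i j = (c beta + alpha + em) / (2 beta) + (lam j - lam i) / (2 xi)].
   Substituted into the flow-balance constraints, this says that the balance
   multipliers solve the graph Laplacian system [L lam = - v] for the
   conductances [beta i j / xi i j + beta j i / xi j i].  Effective resistances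
   are the quadratic form of a generalized inverse of [L], whence
   [\sum_k (R j k - R i k) v k = 2 (lam j - lam i)]. *)

Lemma sum_mul_delta {R : pzRingType} {N : nat} (x : 'I_N -> R) a :
  \sum_k x k * (k == a)%:R = x a.
Proof.
rewrite (bigD1 a) //= eqxx mulr1 big1 ?addr0 // => k /negbTE ->.
by rewrite mulr0.
Qed.

Lemma sum_mul_delta2 {R : pzRingType} {N : nat} (x : 'I_N -> R) a b :
  \sum_k x k * ((k == a)%:R - (k == b)%:R) = x a - x b.
Proof. by under eq_bigr do rewrite mulrBr; rewrite sumrB !sum_mul_delta. Qed.

Section Laplacian.
Context {R : realFieldType} {N : nat} {w : 'I_N -> 'I_N -> R}.
Hypothesis w_sym : forall k l, w k l = w l k.
Hypothesis w_gt0 : forall k l, k != l -> 0 < w k l.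

Definition laplacian (x : 'I_N -> R) k := \sum_l (x k - x l) * w k l.

Lemma laplacianB x y k :
  laplacian (fun t => x t - y t) k = laplacian x k - laplacian y k.
Proof. by rewrite /laplacian -sumrB; apply: eq_bigr => l _; ring. Qed.

Lemma laplacian_selfadjoint x y :
  \sum_k x k * laplacian y k = \sum_k y k * laplacian x k.
Proof.
have split_sum x' y' : \sum_k x' k * laplacian y' k =
    \sum_k \sum_l x' k * y' k * w k l - \sum_k \sum_l x' k * y' l * w k l.
  rewrite -sumrB; apply: eq_bigr => k _.
  by rewrite /laplacian mulr_sumr -sumrB; apply: eq_bigr => l _; ring.
rewrite !split_sum; congr (_ - _).
  by apply: eq_bigr => k _; apply: eq_bigr => l _; rewrite (mulrC (x k)).
rewrite exchange_big /=; apply: eq_bigr => k _; apply: eq_bigr => l _.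
by rewrite w_sym; ring.
Qed.

Lemma sum_laplacian_eq0 x : \sum_k laplacian x k = 0.
Proof.
transitivity (\sum_k (fun=> 1 : R) k * laplacian x k).
  by apply: eq_bigr => k _; rewrite mul1r.
rewrite laplacian_selfadjoint big1 // => k _.
by rewrite /laplacian big1 ?mulr0 // => l _; rewrite subrr mul0r.
Qed.

(* Maximum principle: at a maximum of [x] every term of [laplacian x] is
   nonnegative, hence zero. *)
Lemma harmonic_const x : (forall k, laplacian x k = 0) -> forall k l, x k = x l.
Proof.
move=> harm_x k0; case: (@arg_maxP _ R _ k0 predT x erefl) => m _ max_m.
have term_ge0 l : predT l -> 0 <= (x m - x l) * w m l.
  move=> _; have [<- | ml] := eqVneq m l; first by rewrite subrr mul0r.
  apply: mulr_ge0; last exact: ltW (w_gt0 _ _ ml).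
  by rewrite subr_ge0; apply: max_m.
have at_max k : x k = x m.
  have [-> // | mk] := eqVneq m k.
  have /eqP := psumr_eq0P term_ge0 (harm_x m) (isT : predT k).
  by rewrite mulf_eq0 (gt_eqF (w_gt0 _ _ mk)) orbF subr_eq0 => /eqP.
by move=> l; rewrite !at_max.
Qed.

Definition laplacian_mx : 'M[R]_N :=
  \matrix_(k, l) ((k == l)%:R * \sum_m w k m - w k l).

Lemma mul_row_laplacian_mx (u : 'rV[R]_N) l :
  (u *m laplacian_mx) 0 l = laplacian (fun k => u 0 k) l.
Proof.
rewrite !mxE /laplacian; under eq_bigr do rewrite !mxE mulrBr.
rewrite sumrB; under eq_bigr do rewrite mulrCA mulrC.
rewrite (sum_mul_delta (fun k => u 0 k * \sum_m w k m)) mulr_sumr -sumrB.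
by apply: eq_bigr => k _; rewrite w_sym; ring.
Qed.

Lemma kermx_laplacian_mx : (kermx laplacian_mx <= (const_mx 1 : 'rV_N))%MS.
Proof.
apply/row_subP => i; set r := row i (kermx laplacian_mx).
have r_ker : r *m laplacian_mx = 0 by rewrite -row_mul mulmx_ker row0.
have r_const k l : r 0 k = r 0 l.
  by apply: harmonic_const => {}k; rewrite -mul_row_laplacian_mx r_ker mxE.
have -> : r = r 0 i *: const_mx 1.
  by apply/rowP => k; rewrite [RHS]mxE [const_mx 1 _ _]mxE mulr1 (r_const k i).
exact/scalemx_sub/submx_refl.
Qed.

Lemma laplacian_mx_sum_rows_eq0 :
  (laplacian_mx <= kermx (const_mx 1 : 'cV[R]_N))%MS.
Proof.
rewrite sub_kermx; apply/eqP/matrixP => k z; rewrite !mxE.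
under eq_bigr do rewrite !mxE mulr1.
rewrite sumrB; under eq_bigr do rewrite mulrC eq_sym.
by rewrite (sum_mul_delta (fun=> \sum_m w k m)) subrr.
Qed.

(* The image of the Laplacian is the whole space of zero-sum vectors: by
   [kermx_laplacian_mx] its rank is at least [N - 1]. *)
Lemma laplacian_solvable (b : 'I_N -> R) :
  \sum_k b k = 0 -> exists phi, forall k, laplacian phi k = b k.
Proof.
move=> sum_b0; set L := laplacian_mx; set S := kermx (const_mx 1 : 'cV[R]_N).
have rank_S_le : (\rank S <= \rank L)%N.
  have := mxrankS kermx_laplacian_mx.
  rewrite /S !mxrank_ker -(trmx_const 1 N 1) mxrank_tr.
  (* the two [const_mx 1] differ in their instance paths; [set] merges them *)
  have := rank_leq_col L; rewrite -/L; set r := \rank (const_mx _); lia.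
have S_sub_L : (S <= L)%MS.
  have [_ <-] := mxrank_leqif_sup laplacian_mx_sum_rows_eq0.
  by rewrite eqn_leq rank_S_le mxrankS ?laplacian_mx_sum_rows_eq0.
have b_in_S : (\row_k b k <= S)%MS.
  rewrite sub_kermx; apply/eqP/matrixP => z z'; rewrite !mxE.
  by under eq_bigr do rewrite !mxE mulr1.
have /submxP [phi def_b] : (\row_k b k <= L)%MS.
  exact: submx_trans b_in_S S_sub_L.
by exists (fun k => phi 0 k) => k; rewrite -mul_row_laplacian_mx -def_b mxE.
Qed.

Lemma dipole_potential_exists a b :
  exists phi, forall k, laplacian phi k = (k == a)%:R - (k == b)%:R.
Proof.
apply: laplacian_solvable.
have := sum_mul_delta2 (fun=> 1 : R) a b.
by under eq_bigr do rewrite mul1r; rewrite subrr.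
Qed.

Lemma sum_dipole_potential_mul_laplacian {g} x {a b} :
  (forall k, laplacian g k = (k == a)%:R - (k == b)%:R) ->
  \sum_k g k * laplacian x k = x a - x b.
Proof.
move=> Lg; rewrite laplacian_selfadjoint.
by under eq_bigr do rewrite Lg; exact: sum_mul_delta2.
Qed.

Lemma dipole_potential_reciprocity {phi psi a b c d} :
  (forall k, laplacian phi k = (k == a)%:R - (k == b)%:R) ->
  (forall k, laplacian psi k = (k == c)%:R - (k == d)%:R) ->
  psi a - psi b = phi c - phi d.
Proof.
move=> Lphi Lpsi; rewrite -(sum_dipole_potential_mul_laplacian psi Lphi).
by under eq_bigr do rewrite Lpsi; exact: sum_mul_delta2.
Qed.

Context {Rf : 'I_N -> 'I_N -> R}.
Hypothesis Rf_potential : forall a b,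
  exists2 phi, (forall k, laplacian phi k = (k == a)%:R - (k == b)%:R)
             & Rf a b = phi a - phi b.

Lemma grounded_resistance {G : 'I_N -> 'I_N -> R} {m} :
  (forall a k, laplacian (G a) k = (k == a)%:R - (k == m)%:R) ->
  forall a b, Rf a b = G a a - G b a - G a b + G b b.
Proof.
move=> LG a b; have [phi Lphi ->] := Rf_potential a b.
have LGab k : laplacian (fun t => G a t - G b t) k = (k == a)%:R - (k == b)%:R.
  by rewrite laplacianB !LG; ring.
by rewrite (dipole_potential_reciprocity LGab Lphi); ring.
Qed.

(* For potentials [G a] grounded at [i], [Rf j k - Rf i k] is
   [2 (G i k - G j k)] plus a term independent of [k], which is killed by
   [\sum_k v k = 0]. *)
Lemma sum_resistance_mul {lam v} : (forall k, laplacian lam k = - v k) ->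
  forall i j, \sum_k (Rf j k - Rf i k) * v k = 2 * (lam j - lam i).
Proof.
move=> Llam i j.
have [G LG] := boolp.choice (fun a => dipole_potential_exists a i).
have sum_v0 : \sum_k v k = 0.
  transitivity (- \sum_k laplacian lam k).
    by rewrite -sumrN; apply: eq_bigr => k _; rewrite Llam opprK.
  by rewrite sum_laplacian_eq0 oppr0.
have LGji k : laplacian (fun t => G j t - G i t) k = (k == j)%:R - (k == i)%:R.
  by rewrite laplacianB !LG; ring.
have sum_Gv : \sum_k (G j k - G i k) * v k = - (lam j - lam i).
  rewrite -(sum_dipole_potential_mul_laplacian lam LGji) -sumrN.
  by apply: eq_bigr => k _; rewrite Llam mulrN opprK.
have Rf_diff k : Rf j k - Rf i k =
    (G j j + G j i - G i i - G i i) - 2 * (G j k - G i k).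
  have := dipole_potential_reciprocity (LG j) (LG k).
  have := dipole_potential_reciprocity (LG i) (LG k).
  rewrite !(grounded_resistance LG); lra.
under eq_bigr do rewrite Rf_diff mulrBl.
rewrite sumrB -big_distrr /= sum_v0; under eq_bigr do rewrite -mulrA.
by rewrite -mulr_sumr sum_Gv; ring.
Qed.

End Laplacian.
Arguments laplacian {R N} w x k.

Lemma sum_offdiag_swap {R : nmodType} {N : nat} (F : 'I_N -> 'I_N -> R) :
  \sum_k \sum_(l | l != k) F l k = \sum_k \sum_(l | l != k) F k l.
Proof.
under eq_bigr do rewrite big_mkcond.
rewrite exchange_big; apply: eq_bigr => k _; rewrite [RHS]big_mkcond /=.
by apply: eq_bigr => l _; rewrite eq_sym.
Qed.

Lemma sum_offdiag_update {R : zmodType} {N : nat}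
    (Phi : 'I_N -> 'I_N -> R -> R) (p : 'I_N -> 'I_N -> R) i j x : i != j ->
  \sum_k \sum_(l | l != k)
     Phi k l (if (k == i) && (l == j) then x else p k l)
  = \sum_k \sum_(l | l != k) Phi k l (p k l) + (Phi i j x - Phi i j (p i j)).
Proof.
move=> ij; apply/eqP; rewrite addrC -subr_eq; apply/eqP.
rewrite -sumrB (bigD1 i) //= [X in _ + X]big1 ?addr0; last first.
  by move=> k /negbTE ki; rewrite -sumrB big1 // => l _; rewrite ki subrr.
rewrite -sumrB (bigD1 j) 1?eq_sym //= !eqxx big1 ?addr0 //.
by move=> l /andP [_ /negbTE ->]; rewrite subrr.
Qed.

Lemma sum_offdiag_argmax {R : realDomainType} {N : nat}
    (Phi : 'I_N -> 'I_N -> R -> R) (p : 'I_N -> 'I_N -> R) :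
  (forall q, \sum_k \sum_(l | l != k) Phi k l (q k l)
             <= \sum_k \sum_(l | l != k) Phi k l (p k l)) ->
  forall i j x, i != j -> Phi i j x <= Phi i j (p i j).
Proof.
move=> p_max i j x ij.
have := p_max (fun k l => if (k == i) && (l == j) then x else p k l).
by rewrite sum_offdiag_update // gerDl subr_le0.
Qed.

Lemma quadratic_argmax {R : realFieldType} (K b p : R) : 0 < K ->
  (forall x, b * x - K * x ^+ 2 <= b * p - K * p ^+ 2) -> p = b / (2 * K).
Proof.
move=> K_gt0 p_max; have := p_max (b / (2 * K)); rewrite -subr_le0.
have -> : b * (b / (2 * K)) - K * (b / (2 * K)) ^+ 2 - (b * p - K * p ^+ 2)
          = K * (p - b / (2 * K)) ^+ 2.
  by field; rewrite gt_eqF.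
rewrite pmulr_rle0 // => sq_le0; apply/eqP; rewrite -subr_eq0 -sqrf_eq0.
by rewrite eq_le sq_le0 sqr_ge0.
Qed.

Section Network.
Context {R : realType} {N : nat} {beta xi : 'I_N -> 'I_N -> R}.
Hypothesis beta_gt0 : forall i j, i != j -> 0 < beta i j.
Hypothesis xi_gt0 : forall i j, i != j -> 0 < xi i j.

Definition conductance (k l : 'I_N) : R := beta k l / xi k l + beta l k / xi l k.

Lemma conductance_sym k l : conductance k l = conductance l k.
Proof. by rewrite /conductance addrC. Qed.

Lemma conductance_gt0 k l : k != l -> 0 < conductance k l.
Proof.
move=> kl; have lk : l != k by rewrite eq_sym.
by rewrite addr_gt0 // divr_gt0 ?beta_gt0 ?xi_gt0.
Qed.

Lemma unit_current_potentialE a b phi :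
  unit_current_potential beta xi a b phi <->
  forall k, laplacian conductance phi k = (k == a)%:R - (k == b)%:R.
Proof.
have lapE k : \sum_(l < N | l != k) (phi k - phi l) / resist beta xi k l
              = laplacian conductance phi k.
  rewrite /laplacian [RHS](bigD1 k) //= subrr mul0r add0r.
  by apply: eq_bigr => l _; rewrite /resist div1r invrK.
by split=> Lphi k; [rewrite -lapE | rewrite lapE]; apply: Lphi.
Qed.

Lemma eff_res_potential a b :
  exists2 phi, (forall k, laplacian conductance phi k = (k == a)%:R - (k == b)%:R)
             & eff_res beta xi a b = phi a - phi b.
Proof.
rewrite /eff_res; case: pselect => [ex_phi | no_phi].
  exists (projT1 (cid ex_phi)) => //.
  exact/unit_current_potentialE/(projT2 (cid ex_phi)).
have [phi Lphi] := dipole_potential_exists conductance_sym conductance_gt0 a b.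
by case: no_phi; exists phi; apply/unit_current_potentialE.
Qed.

End Network.
Arguments conductance {R N} beta xi k l.

Section Pricing.
Context {R : realType} {N : nat} {alpha beta xi em : 'I_N -> 'I_N -> R}.
Context {c pmax : R}.
Hypothesis beta_gt0 : forall i j, i != j -> 0 < beta i j.
Hypothesis xi_gt0 : forall i j, i != j -> 0 < xi i j.

Definition link_lagrangian (lam : 'I_N -> R) k l (x : R) : R :=
  xi k l * (alpha k l - beta k l * x + em k l) * x
  - xi k l * (alpha k l - beta k l * x) * c
  + (lam k - lam l) * (alpha k l - beta k l * x).

Lemma link_lagrangianE lam k l x :
  link_lagrangian lam k l x =
    (xi k l * (alpha k l + em k l + beta k l * c)
     + beta k l * (lam l - lam k)) * x - xi k l * beta k l * x ^+ 2 + (lam k - lam l - xi k l * c) * alpha k l.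
Proof. by rewrite /link_lagrangian; ring. Qed.

(* The multiplier of the balance constraint at [i] is paid on every link
   leaving [i] and refunded on every link entering it. *)
Lemma lagrangian_separable q lam mu : (forall k l, k != l -> mu k l = 0) ->
  lagrangian alpha beta xi em c pmax q lam mu
  = \sum_k \sum_(l | l != k) link_lagrangian lam k l (q k l).
Proof.
move=> mu0; rewrite /lagrangian /objective /balance.
rewrite [X in _ - X]big1 ?subr0; last first.
  by move=> k _; apply: big1 => l lk; rewrite mu0 1?eq_sym ?mul0r.
under [X in _ + X]eq_bigr do rewrite mulrBr !mulr_sumr.
rewrite sumrB.
rewrite (sum_offdiag_swap (fun l k => lam k * (alpha l k - beta l k * q l k))).
rewrite -!sumrB -big_split /=; apply: eq_bigr => k _.
rewrite -!sumrB -big_split /=; apply: eq_bigr => l _.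
by rewrite /link_lagrangian; ring.
Qed.

Definition stationary_price (lam : 'I_N -> R) k l : R :=
  (c * beta k l + alpha k l + em k l) / (2 * beta k l)
  + (lam l - lam k) / (2 * xi k l).

Lemma optimal_dual_price {p lam mu} :
  optimal_dual alpha beta xi em c pmax p lam mu ->
  (forall k l, k != l -> mu k l = 0) ->
  forall k l, k != l -> p k l = stationary_price lam k l.
Proof.
move=> [_ p_max] mu0 k l kl.
have link_max x : link_lagrangian lam k l x <= link_lagrangian lam k l (p k l).
  apply: (sum_offdiag_argmax (link_lagrangian lam) p _ k l x kl) => q.
  by rewrite -(lagrangian_separable q _ _ mu0) -(lagrangian_separable p _ _ mu0).
have [b_gt0 xi_gt0kl] := (beta_gt0 _ _ kl, xi_gt0 _ _ kl).
have -> : p k l = (xi k l * (alpha k l + em k l + beta k l * c)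
                  + beta k l * (lam l - lam k)) / (2 * (xi k l * beta k l)).
  apply: quadratic_argmax; first exact: mulr_gt0.
  by move=> x; have := link_max x; rewrite !link_lagrangianE lerD2r.
by rewrite /stationary_price; field; rewrite !gt_eqF.
Qed.

Lemma balance_laplacian {p lam} : (forall k, balance alpha beta p k = 0) ->
  (forall k l, k != l -> p k l = stationary_price lam k l) ->
  forall k, laplacian (conductance beta xi) lam k = - vnode alpha beta em c k.
Proof.
move=> balanced price k; apply/eqP; rewrite -addr_eq0.
rewrite /laplacian (bigD1 k) //= subrr mul0r add0r /vnode -sumrB -big_split /=.
apply/eqP; transitivity (2 * balance alpha beta p k); last first.
  by rewrite balanced mulr0.
rewrite /balance -sumrB mulr_sumr; apply: eq_bigr => l lk.
have kl : k != l by rewrite eq_sym.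
have := (beta_gt0 _ _ kl, beta_gt0 _ _ lk, xi_gt0 _ _ kl, xi_gt0 _ _ lk).
move=> [[[bkl blk] xkl] xlk]; rewrite !price // /stationary_price /conductance.
by field; rewrite !gt_eqF.
Qed.

End Pricing.

Theorem proposition1 (R : realType) (N : nat)
  (alpha beta xi : 'I_N -> 'I_N -> R) (F : 'I_N -> 'I_N -> probability R R)
  (lo hi c pmax : R)
  (Halpha : forall i j, i != j -> 0 < alpha i j)
  (Hbeta : forall i j, i != j -> 0 < beta i j)
  (Hxi : forall i j, i != j -> 0 < xi i j)
  (HFsupp : forall i j, i != j -> F i j (`[lo, hi]%classic) = 1%E)
  (HFmean : forall i j, i != j -> (\int[F i j]_x x%:E = 0)%E)
  (Hc : 0 < c) (Hpmax : c < pmax)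
  (p : 'I_N -> 'I_N -> R) (lam : 'I_N -> R) (mu : 'I_N -> 'I_N -> R) :
  let em := fun i j => eps_minus lo (F i j) in
  optimal alpha beta xi em c pmax p ->
  optimal_dual alpha beta xi em c pmax p lam mu ->
  (forall i j, i != j -> mu i j = 0) ->
  forall i j, i != j ->
    p i j = (c * beta i j + alpha i j + em i j) / (2 * beta i j)
            + (4 * xi i j)^-1 *
              \sum_(k < N) (eff_res beta xi j k - eff_res beta xi i k)
                           * vnode alpha beta em c k.
Proof.
move=> em [[balanced _] _] p_dual mu0 i j ij.
have price := optimal_dual_price Hbeta Hxi p_dual mu0.
have Llam := balance_laplacian Hbeta Hxi balanced price.
rewrite price // /stationary_price (sum_resistance_mul conductance_sym
  (conductance_gt0 Hbeta Hxi) (eff_res_potential Hbeta Hxi) Llam).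
by field; rewrite !gt_eqF ?Hbeta ?Hxi.
Qed.
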